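(* Let $(A,\mathbf{B})$ be a reality-based algebra with positive degree map, let $F$ be its field of definition, let $\chi\in\mathrm{Irr}(A)$, and let $\mathcal{X}$ be a representation of $A$ affording $\chi$. Then the multiplicity $m_\chi$ lies in $F(\chi)$, and for every $b\in\mathbf{B}$ the coefficients of the characteristic polynomial of $\mathcal{X}(b)$ lie in $F(\chi)$.
   Context: A reality-based algebra (RBA) is a pair $(A,\mathbf{B})$ where $A$ is an associative unital $\mathbb{C}$-algebra with a skew-linear involution $*$, $\mathbf{B}=\{b_0=1_A,b_1,\dots,b_{r-1}\}$ is a $*$-invariant basis of $A$, the structure constants $\lambda_{ijk}$ defined by $b_ib_j=\sum_k\lambda_{ijk}b_k$ are real, and for each $i$, $b_i^*$ is the unique $b_j$ with $\lambda_{ij0}\neq0$, and $\lambda_{ii^*0}=\lambda_{i^*i0}>0$. It has a positive degree map if there is a $*$-algebra homomorphism $\delta:A\to\mathbb{C}$ with $\delta(b_i)>0$ for all $i$; $\mathbf{B}$ is taken to be the standard basis, normalized so that the coefficient of $1$ in $b_ib_i^*$ equals $\delta(b_i)$. The field of definition $F$ is the smallest extension of $\mathbb{Q}$ containing all structure constants of the standard basis. $F(\chi)$ is the field generated over $F$ by the values of $\chi$. With $n=\sum_i\delta(b_i)$ and $\tau(\sum_i\alpha_ib_i)=n\alpha_0$, the multiplicities $m_\psi$ are defined by $\tau=\sum_{\psi\in\mathrm{Irr}(A)}m_\psi\psi$. *)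

From HB Require Import structures.
From mathcomp Require Import all_boot all_order all_algebra.
Set Implicit Arguments. Unset Strict Implicit. Unset Printing Implicit Defensive.
Import Order.TTheory GRing.Theory Num.Theory.
Local Open Scope ring_scope.

(* A reality-based algebra of dimension r+1 over an algebraically closed
   numeric field C (e.g. the complex numbers), given by its basis
   b_0 = 1, b_1, ..., b_r and its structure constants
   b_i b_j = \sum_k lam i j k b_k.  The involution * is the skew-linear
   anti-automorphism sending b_i to b_(star i). *)
Definition is_RBA (C : numClosedFieldType) (r : nat)
    (lam : 'I_r.+1 -> 'I_r.+1 -> 'I_r.+1 -> C) (star : 'I_r.+1 -> 'I_r.+1) : Prop :=
  (forall i j k, lam i j k \is Num.real) /\
  (forall j k, lam ord0 j k = (j == k)%:R) /\
  (forall i k, lam i ord0 k = (i == k)%:R) /\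
  (forall i j k m, \sum_l lam i j l * lam l k m = \sum_l lam j k l * lam i l m) /\
  involutive star /\
  (* (b_i b_j)^* = b_j^* b_i^* *)
  (forall i j k, lam (star j) (star i) (star k) = lam i j k) /\
  (forall i j, lam i j ord0 != 0 <-> j = star i) /\
  (forall i, lam i (star i) ord0 = lam (star i) i ord0 /\ 0 < lam i (star i) ord0).

(* positive degree map: a *-algebra homomorphism A -> C, positive on B *)
Definition is_pos_degree_map (C : numClosedFieldType) (r : nat)
    (lam : 'I_r.+1 -> 'I_r.+1 -> 'I_r.+1 -> C) (star : 'I_r.+1 -> 'I_r.+1)
    (delta : 'I_r.+1 -> C) : Prop :=
  delta ord0 = 1 /\
  (forall i j, delta i * delta j = \sum_k lam i j k * delta k) /\
  (forall i, delta (star i) = (delta i)^*) /\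
  (forall i, 0 < delta i).

Definition is_standard (C : numClosedFieldType) (r : nat)
    (lam : 'I_r.+1 -> 'I_r.+1 -> 'I_r.+1 -> C) (star : 'I_r.+1 -> 'I_r.+1)
    (delta : 'I_r.+1 -> C) : Prop :=
  forall i, lam i (star i) ord0 = delta i.

(* a (unital) matrix representation of A of degree d, given by X i = X(b_i) *)
Definition is_rep (C : numClosedFieldType) (r : nat)
    (lam : 'I_r.+1 -> 'I_r.+1 -> 'I_r.+1 -> C) (d : nat)
    (X : 'I_r.+1 -> 'M[C]_d) : Prop :=
  X ord0 = 1%:M /\ (forall i j, X i *m X j = \sum_k lam i j k *: X k).

Definition is_irr_rep (C : numClosedFieldType) (r : nat) (d : nat)
    (X : 'I_r.+1 -> 'M[C]_d) : Prop :=
  (0 < d)%N /\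
  (forall U : 'M[C]_d, (forall i, stablemx U (X i)) ->
     \rank U = 0%N \/ \rank U = d).

Definition is_irr_char (C : numClosedFieldType) (r : nat)
    (lam : 'I_r.+1 -> 'I_r.+1 -> 'I_r.+1 -> C) (chi : 'I_r.+1 -> C) : Prop :=
  exists d (X : 'I_r.+1 -> 'M[C]_d),
    is_rep lam X /\ is_irr_rep X /\ forall i, chi i = \tr (X i).

Definition in_field_gen (C : fieldType) (S : C -> Prop) (x : C) : Prop :=
  forall K : {pred C}, GRing.divring_closed K ->
    (forall y, S y -> y \in K) -> x \in K.

Definition F_gens (C : numClosedFieldType) (r : nat)
    (lam : 'I_r.+1 -> 'I_r.+1 -> 'I_r.+1 -> C) : C -> Prop :=
  fun x => exists i j k, x = lam i j k.

Definition Fchi_gens (C : numClosedFieldType) (r : nat)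
    (lam : 'I_r.+1 -> 'I_r.+1 -> 'I_r.+1 -> C) (chi : 'I_r.+1 -> C) : C -> Prop :=
  fun x => F_gens lam x \/ exists i, x = chi i.

Definition tau (C : numClosedFieldType) (r : nat) (delta : 'I_r.+1 -> C)
    (i : 'I_r.+1) : C :=
  (\sum_j delta j) * (i == ord0)%:R.

From HB Require Import structures.
From mathcomp Require Import all_boot all_order all_algebra.
From mathcomp Require Import ring zify.
Import Order.TTheory GRing.Theory Num.Theory.
Local Open Scope ring_scope.
Set Implicit Arguments. Unset Strict Implicit. Unset Printing Implicit Defensive.

(* X(b)^j is a K-linear combination of the
     X(b_k), so tr(X(b)^j) lies in K.  Over an algebraically closed field of
     characteristic 0, triangularising X(b) turns these traces into power sums
     of the eigenvalues, and Newton's identities recover the coefficients of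
     char_poly (X b) from them.
   - Multiplicities.  The averaging operator M |-> \sum_i delta(b_i)^-1
     X1(b_i^* ) M X2(b_i) produces intertwiners, so by Schur's lemma distinct
     irreducible characters are orthogonal for the form
     <chi1, chi2> = \sum_i delta(b_i)^-1 chi1(b_i^* ) chi2(b_i).  Pairing
     tau = \sum_psi m_psi psi with chi then gives m_chi <chi, chi> = n chi(1),
     and since n chi(1) <> 0 this expresses m_chi as an element of K. *)

Section Newton.
Variable R : comNzRingType.

Lemma telescope_sum (u : nat -> R) x k m :
  \sum_(j < m) (u (k + j)%N - x * u (k + j).+1) * x ^+ j = u k - x ^+ m * u (k + m)%N.
Proof.
elim: m => [|m IH]; first by rewrite big_ord0 expr0 mul1r addn0 subrr.
by rewrite big_ord_recr /= IH addnS exprS; ring.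
Qed.

(* Newton's identities for a polynomial p of degree d with "roots" z_i,
   given by factorisations p = (X - z_i) q_i such that p' = \sum_i q_i:
   \sum_(j <= d - k) p_(k+j) P_j = k p_k, where P_j = \sum_i z_i^j. *)
Lemma newton_identity d (p : {poly R}) (z : 'I_d -> R) (q : 'I_d -> {poly R}) :
  size p = d.+1 -> (forall i, p = ('X - (z i)%:P) * q i) ->
  p^`() = \sum_i q i ->
  forall k, (k <= d)%N ->
  \sum_(j < d.+1 - k) p`_(k + j) * (\sum_i z i ^+ j) = p`_k *+ k.
Proof.
move=> size_p p_fact p_deriv k le_kd.
have q_top i : (q i)`_d = 0.
  have [->|q0] := eqVneq (q i) 0; first by rewrite coef0.
  move: size_p; rewrite (p_fact i) size_monicM ?monicXsubC // size_XsubC /=.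
  by case=> size_q; rewrite nth_default // -size_q.
have coef_p i j : p`_j = ('X * q i)`_j - z i * ('X * q i)`_j.+1.
  by rewrite {1}(p_fact i) mulrBl coefB coefCM !coefXM.
transitivity (\sum_i ('X * q i)`_k).
  under eq_bigr => j _ do rewrite mulr_sumr.
  rewrite exchange_big /=; apply: eq_bigr => i _.
  under eq_bigr => j _ do rewrite (coef_p i).
  rewrite telescope_sum subnKC; last exact: leqW.
  by rewrite [X in _ - _ * X]coefXM /= q_top mulr0 subr0.
rewrite -coef_sum -mulr_sumr -p_deriv coefXM.
by case: k le_kd => [|k] _; rewrite ?mulr0n // coef_deriv.
Qed.

Lemma deriv_prod n (f : 'I_n -> {poly R}) :
  (\prod_i f i)^`() = \sum_i (f i)^`() * \prod_(j | j != i) f j.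
Proof.
elim: n f => [|n IH] f; first by rewrite big_ord0 big_ord0 derivC.
rewrite big_ord_recr derivM IH /= big_ord_recr /=.
have max_neq (j : 'I_n) : ord_max != widen_ord (leqnSn n) j.
  by rewrite -val_eqE /= neq_ltn ltn_ord orbT.
congr (_ + _).
- rewrite mulr_suml; apply: eq_bigr => i _; rewrite -mulrA; congr (_ * _).
  rewrite [RHS]big_mkcond big_ord_recr /= max_neq; congr (_ * _).
  by rewrite big_mkcond; apply: eq_bigr => j _; rewrite -val_eqE.
- rewrite [RHS]mulrC [in RHS]big_mkcond big_ord_recr /= eqxx mulr1; congr (_ * _).
  by apply: eq_bigr => j _; rewrite eq_sym max_neq.
Qed.

End Newton.

Section TriangularMatrices.
Variable R : comNzRingType.

Lemma trig_mulmx n (A B : 'M[R]_n) :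
  is_trig_mx A -> is_trig_mx B ->
  is_trig_mx (A *m B) /\ forall i, (A *m B) i i = A i i * B i i.
Proof.
move=> /is_trig_mxP A_trig /is_trig_mxP B_trig; split.
  apply/is_trig_mxP => i l lt_il; rewrite mxE big1 // => k _.
  have [lt_ik|le_ki] := ltnP i k; first by rewrite A_trig // mul0r.
  by rewrite B_trig ?mulr0 // (leq_ltn_trans le_ki lt_il).
move=> i; rewrite mxE (bigD1 i) //= big1 ?addr0 // => k neq_ki.
have [lt_ik|lt_ki|eq_ik] := ltngtP i k; first by rewrite A_trig // mul0r.
  by rewrite B_trig ?mulr0.
by move: neq_ki; rewrite -val_eqE /= eq_ik eqxx.
Qed.

Lemma mxtrace_trig_exp n (T : 'M[R]_n) j :
  is_trig_mx T -> \tr (T ^+ j) = \sum_i T i i ^+ j.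
Proof.
move=> T_trig.
suff [_ diag_exp] : is_trig_mx (T ^+ j) /\ forall i, (T ^+ j) i i = T i i ^+ j.
  by apply: eq_bigr => i _; rewrite diag_exp.
elim: j => [|j [IH_trig IH_diag]].
  split => [|i]; last by rewrite expr0 mxE eqxx.
  by apply/is_trig_mxP => i l lt_il; rewrite expr0 mxE -val_eqE /= (ltn_eqF lt_il).
rewrite exprSr -mulmxE; have [trig_prod diag_prod] := trig_mulmx IH_trig T_trig.
by split => // i; rewrite diag_prod IH_diag exprSr.
Qed.

End TriangularMatrices.

Section Similarity.
Variables (F : fieldType) (n : nat) (P : 'M[F]_n).
Hypothesis P_unit : P \in unitmx.

Lemma char_poly_conj (A : 'M[F]_n) : char_poly (P *m A *m invmx P) = char_poly A.
Proof.
rewrite /char_poly /char_poly_mx.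
set mP := map_mx polyC P; set mQ := map_mx polyC (invmx P).
have PQ : mP *m mQ = 1%:M by rewrite -map_mxM mulmxV // map_mx1.
have QP : mQ *m mP = 1%:M by rewrite -map_mxM mulVmx // map_mx1.
have -> : 'X%:M - map_mx polyC (P *m A *m invmx P) =
          mP *m ('X%:M - map_mx polyC A) *m mQ.
  by rewrite !map_mxM mulmxBr mulmxBl mul_mx_scalar -scalemxAl PQ scalemx1.
by rewrite !det_mulmx mulrC mulrA -det_mulmx QP det1 mul1r.
Qed.

Lemma conj_expmx (A : 'M[F]_n) j : (P *m A *m invmx P) ^+ j = P *m A ^+ j *m invmx P.
Proof.
elim: j => [|j IH]; first by rewrite !expr0 mulmx1 mulmxV.
by rewrite exprSr IH -mulmxE !mulmxA mulmxKV // exprSr -mulmxE !mulmxA.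
Qed.

End Similarity.

Section PowerSums.
Variables (R : numFieldType) (K : {pred R}) (HK : GRing.divring_closed K).
HB.instance Definition _ := GRing.isDivringClosed.Build R K HK.

(* In characteristic 0, Newton's identities express each coefficient of a
   monic polynomial through the power sums of its roots; hence a subfield
   containing all power sums contains all coefficients. *)
Lemma coef_in_subfield_of_power_sums d (p : {poly R}) (z : 'I_d -> R)
    (q : 'I_d -> {poly R}) :
  size p = d.+1 -> p`_d = 1 -> (forall i, p = ('X - (z i)%:P) * q i) ->
  p^`() = \sum_i q i -> (forall j, \sum_i z i ^+ j \in K) ->
  forall k, p`_k \in K.
Proof.
move=> size_p p_monic p_fact p_deriv powK.
suff coefK n k : (d - k <= n)%N -> p`_k \in K by move=> k; apply: (coefK (d - k)%N).
elim: n k => [|n IH] k.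
  rewrite leqn0 subn_eq0 leq_eqVlt => /orP[/eqP<-|lt_dk]; first by rewrite p_monic rpred1.
  by rewrite nth_default ?rpred0 // size_p.
rewrite leq_eqVlt => /orP[/eqP dk|]; last by rewrite ltnS; apply: IH.
have lt_kd : (k < d)%N by rewrite -subn_gt0 dk.
have := newton_identity size_p p_fact p_deriv (ltnW lt_kd).
rewrite subSn ?(ltnW lt_kd) // dk big_ord_recl /= addn0.
under eq_bigr do rewrite expr0.
rewrite sumr_const card_ord; set S := \sum_(i < n.+1) _ => newton.
have SK : S \in K.
  by apply: rpred_sum => j _; rewrite rpredM ?powK //; apply: IH; rewrite /bump /=; lia.
have dk_neq0 : (d - k)%:R != 0 :> R by rewrite pnatr_eq0 -lt0n subn_gt0.
have -> : p`_k = - S / (d - k)%:R.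
  apply: (mulIf dk_neq0); rewrite mulfVK // natrB ?(ltnW lt_kd) // mulrBr.
  by move: newton; rewrite -(mulr_natr p`_k k) => <-; ring.
by rewrite rpred_div ?rpredN ?rpred_nat.
Qed.

End PowerSums.

(* Schur's lemma: an intertwiner E between two irreducible representations
   is either zero or invertible; in the latter case the representations are
   similar and thus afford the same character. *)
Lemma schur_lemma (C : numClosedFieldType) r d1 d2
    (X1 : 'I_r.+1 -> 'M[C]_d1) (X2 : 'I_r.+1 -> 'M[C]_d2) (E : 'M[C]_(d1, d2)) :
  is_irr_rep X1 -> is_irr_rep X2 -> (forall j, X1 j *m E = E *m X2 j) ->
  E = 0 \/ (forall j, \tr (X1 j) = \tr (X2 j)).
Proof.
move=> [_ irr1] [_ irr2] intertw.
have [/eqP|rE_neq0] := eqVneq (\rank E) 0%N; first by rewrite mxrank_eq0 => /eqP; left.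
right.
(* the image of E is a nonzero X2-stable subspace, hence the whole space *)
have rankE : \rank E = d2.
  have im_stable i : stablemx <<E>>%MS (X2 i).
    by rewrite (eqmxMr _ (genmxE E)) genmxE -intertw submxMl.
  by case: (irr2 _ im_stable); rewrite genmxE // => rE0; rewrite rE0 eqxx in rE_neq0.
(* the kernel of E is an X1-stable proper subspace, hence zero *)
have ker_stable i : stablemx (kermx E) (X1 i).
  by apply/sub_kermxP; rewrite -mulmxA intertw mulmxA mulmx_ker mul0mx.
have le_d21 : (d2 <= d1)%N by rewrite -rankE rank_leq_row.
have eq_d12 : d1 = d2 by case: (irr1 _ ker_stable); rewrite mxrank_ker rankE; lia.
subst d2; have E_unit : E \in unitmx by rewrite -row_free_unit /row_free rankE.
by move=> j; rewrite -(mulKmx E_unit (X2 j)) -intertw mxtrace_mulC mulmxK.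
Qed.

Lemma irr_char_degree_neq0 (C : numClosedFieldType) r
    (lam : 'I_r.+1 -> 'I_r.+1 -> 'I_r.+1 -> C) (chi : 'I_r.+1 -> C) :
  is_irr_char lam chi -> chi ord0 != 0.
Proof.
case=> d [X [[X0 _] [[d_gt0 _] chiE]]].
by rewrite chiE X0 mxtrace1 pnatr_eq0 -lt0n.
Qed.

Lemma mul_delta_mx_entry (R : comNzRingType) m n k l (A : 'M[R]_(m, n))
    (B : 'M[R]_(k, l)) p q s t :
  (A *m delta_mx p q *m B) s t = A s p * B q t.
Proof.
rewrite mxE (bigD1 q) //= big1 ?addr0 => [|u neq_uq]; last first.
  by rewrite mxE big1 ?mul0r // => v _; rewrite mxE (negbTE neq_uq) andbF mulr0.
rewrite mxE (bigD1 p) //= big1 ?addr0 => [|v neq_vp]; last by rewrite mxE (negbTE neq_vp) mulr0.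
by rewrite mxE !eqxx mulr1.
Qed.

Section RealityBasedAlgebra.
Variables (C : numClosedFieldType) (r : nat).
Variables (lam : 'I_r.+1 -> 'I_r.+1 -> 'I_r.+1 -> C) (star : 'I_r.+1 -> 'I_r.+1).
Variable delta : 'I_r.+1 -> C.
Hypotheses (HRBA : is_RBA lam star) (Hdeg : is_pos_degree_map lam star delta).
Hypothesis Hstd : is_standard lam star delta.

Lemma star_invol : involutive star.
Proof. by case: HRBA => _ [_ [_ [_ []]]]. Qed.

Lemma delta_neq0 i : delta i != 0.
Proof. by case: Hdeg => _ [_ [_ delta_gt0]]; rewrite gt_eqF. Qed.

Lemma star0 : star ord0 = ord0.
Proof.
case: HRBA => _ [lam0 [_ [_ [_ [_ [lam_coef0 _]]]]]].
by apply/esym/(lam_coef0 ord0 ord0); rewrite lam0 eqxx oner_neq0.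
Qed.

Lemma lam_coef0 i j : lam i j ord0 = if j == star i then delta i else 0.
Proof.
case: HRBA => _ [_ [_ [_ [_ [_ [lam_coef0 _]]]]]].
case: eqP => [->|neq_j]; first exact: Hstd.
by apply/eqP; apply: contraT => /(lam_coef0 i j).
Qed.

Lemma delta_star i : delta (star i) = delta i.
Proof.
case: HRBA => _ [_ [_ [_ [invol [_ [_ lam_sym]]]]]].
by rewrite -Hstd invol -(lam_sym i).1 Hstd.
Qed.

(* Comparing the coefficients of b_0 in (b_i b_j) b_k^* = b_i (b_j b_k^* )
   gives the basic symmetry of the structure constants of a standard basis. *)
Lemma lam_rotate i j k : lam i j k * delta k = lam j (star k) (star i) * delta i.
Proof.
case: HRBA => _ [_ [_ [lam_assoc _]]].
have := lam_assoc i j (star k) ord0.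
rewrite (bigD1 k) //= big1 => [|l neq_lk]; last first.
  by rewrite lam_coef0 (inj_eq (inv_inj star_invol)) eq_sym (negbTE neq_lk) mulr0.
rewrite (bigD1 (star i)) //= [X in _ = _ + X]big1 => [|l neq_li]; last first.
  by rewrite lam_coef0 (negbTE neq_li) mulr0.
by rewrite !addr0 !lam_coef0 !eqxx.
Qed.

Definition average d1 d2 (X1 : 'I_r.+1 -> 'M[C]_d1) (X2 : 'I_r.+1 -> 'M[C]_d2)
    (M : 'M[C]_(d1, d2)) : 'M[C]_(d1, d2) :=
  \sum_i (delta i)^-1 *: (X1 (star i) *m M *m X2 i).

Lemma average_intertwines d1 d2 (X1 : 'I_r.+1 -> 'M[C]_d1)
    (X2 : 'I_r.+1 -> 'M[C]_d2) (M : 'M[C]_(d1, d2)) :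
  is_rep lam X1 -> is_rep lam X2 ->
  forall j, X1 j *m average X1 X2 M = average X1 X2 M *m X2 j.
Proof.
move=> [_ X1M] [_ X2M] j; rewrite /average.
have -> : X1 j *m (\sum_i (delta i)^-1 *: (X1 (star i) *m M *m X2 i)) =
   \sum_u \sum_v ((delta v)^-1 * lam j (star v) u) *: (X1 u *m M *m X2 v).
  rewrite exchange_big /= mulmx_sumr; apply: eq_bigr => v _.
  rewrite -scalemxAr !mulmxA X1M !mulmx_suml scaler_sumr; apply: eq_bigr => u _.
  by rewrite -!scalemxAl scalerA.
have -> : (\sum_i (delta i)^-1 *: (X1 (star i) *m M *m X2 i)) *m X2 j =
   \sum_u \sum_v ((delta u)^-1 * lam (star u) j v) *: (X1 u *m M *m X2 v).
  rewrite mulmx_suml (reindex_inj (inv_inj star_invol)) /=; apply: eq_bigr => u _.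
  rewrite -scalemxAl -!mulmxA X2M !mulmx_sumr scaler_sumr; apply: eq_bigr => v _.
  by rewrite -!scalemxAr scalerA star_invol delta_star !mulmxA.
apply: eq_bigr => u _; apply: eq_bigr => v _; congr (_ *: _).
have := lam_rotate (star u) j v; rewrite star_invol delta_star => rot.
have du := delta_neq0 u; have dv := delta_neq0 v.
apply: (mulfI du); apply: (mulIf dv).
transitivity (lam j (star v) u * delta u); first by field.
by rewrite -rot; field.
Qed.

Lemma irr_char_orthogonality (chi1 chi2 : 'I_r.+1 -> C) :
  is_irr_char lam chi1 -> is_irr_char lam chi2 -> ~ (forall i, chi1 i = chi2 i) ->
  \sum_i (delta i)^-1 * chi1 (star i) * chi2 i = 0.
Proof.
move=> [d1 [X1 [X1_rep [X1_irr chi1E]]]] [d2 [X2 [X2_rep [X2_irr chi2E]]]] chi12_neq.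
have average0 p q : average X1 X2 (delta_mx p q) = 0.
  have [//|same_tr] := schur_lemma X1_irr X2_irr (average_intertwines (delta_mx p q) X1_rep X2_rep).
  by case: chi12_neq => i; rewrite chi1E chi2E same_tr.
transitivity (\sum_p \sum_q average X1 X2 (delta_mx p q) p q); last first.
  by rewrite big1 // => p _; rewrite big1 // => q _; rewrite average0 mxE.
have average_entry p q : average X1 X2 (delta_mx p q) p q =
    \sum_i (delta i)^-1 * (X1 (star i) p p * X2 i q q).
  by rewrite summxE; apply: eq_bigr => i _; rewrite mxE mul_delta_mx_entry.
under [RHS]eq_bigr do under eq_bigr do rewrite average_entry.
rewrite exchange_big /=; under [RHS]eq_bigr do rewrite exchange_big /=.
rewrite [RHS]exchange_big /=; apply: eq_bigr => i _.
rewrite chi1E chi2E /mxtrace mulr_sumr; apply: eq_bigr => q _.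
by rewrite mulr_sumr mulr_suml; apply: eq_bigr => p _; ring.
Qed.

Lemma order_neq0 : \sum_i delta i != 0.
Proof.
case: Hdeg => delta0 [_ [_ delta_gt0]].
rewrite (bigD1 ord0) //= delta0 gt_eqF // ltr_pwDl //.
by apply: sumr_ge0 => i _; apply: ltW.
Qed.

(* Pairing tau = \sum_psi m_psi psi with an irreducible character chi via the
   form of the orthogonality relation isolates m_chi:
   m_chi = n chi(1) / \sum_i delta(b_i)^-1 chi(b_i^* ) chi(b_i). *)
Lemma multiplicity_formula N (psi : 'I_N -> 'I_r.+1 -> C) (m : 'I_N -> C) :
  (forall a, is_irr_char lam (psi a)) ->
  (forall a b, (forall i, psi a i = psi b i) -> a = b) ->
  (forall i, tau delta i = \sum_a m a * psi a i) ->
  forall a, m a = (\sum_j delta j) * psi a ord0 /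
                  \sum_i (delta i)^-1 * psi a (star i) * psi a i.
Proof.
move=> psi_irr psi_inj tau_dec a.
set S := \sum_i (delta i)^-1 * psi a (star i) * psi a i.
have tau_pairing : \sum_i (delta i)^-1 * tau delta (star i) * psi a i =
    (\sum_j delta j) * psi a ord0.
  rewrite (bigD1 ord0) //= big1 ?addr0 => [|i neq_i0]; last first.
    rewrite /tau -{1}star0 (inj_eq (inv_inj star_invol)) (negbTE neq_i0).
    by rewrite !mulr0 mul0r.
  by rewrite /tau star0 eqxx (proj1 Hdeg) invr1 mul1r mulr1.
have mS : m a * S = (\sum_j delta j) * psi a ord0.
  rewrite -tau_pairing; under [RHS]eq_bigr do rewrite tau_dec mulr_sumr mulr_suml.
  rewrite exchange_big /= (bigD1 a) //= [X in _ = _ + X]big1 ?addr0 => [|b neq_ba].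
    by rewrite /S mulr_sumr; apply: eq_bigr => i _; ring.
  have neq_psi : ~ (forall i, psi b i = psi a i).
    by move=> same; rewrite (psi_inj _ _ same) eqxx in neq_ba.
  have orth := irr_char_orthogonality (psi_irr b) (psi_irr a) neq_psi.
  transitivity (m b * \sum_i (delta i)^-1 * psi b (star i) * psi a i).
    by rewrite mulr_sumr; apply: eq_bigr => i _; ring.
  by rewrite orth mulr0.
have S_neq0 : S != 0.
  apply: contraNneq (mulf_neq0 order_neq0 (irr_char_degree_neq0 (psi_irr a))).
  by rewrite -mS => ->; rewrite mulr0.
by rewrite -mS mulfK.
Qed.

End RealityBasedAlgebra.

Section ClosedFieldSubfield.
Variables (C : numClosedFieldType) (K : {pred C}) (HK : GRing.divring_closed K).
HB.instance Definition _ := GRing.isDivringClosed.Build C K HK.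

(* If K contains the traces of all powers of A, it contains the coefficients
   of the characteristic polynomial of A: triangularise A, so that these
   traces are the power sums of the eigenvalues, and apply Newton. *)
Lemma char_poly_coef_in_subfield n (A : 'M[C]_n) :
  (forall j, \tr (A ^+ j) \in K) -> forall k, (char_poly A)`_k \in K.
Proof.
move=> trK.
have [P P_unit T_trig] : exists2 P, P \in unitmx & is_trig_mx (P *m A *m invmx P).
  case: n A {trK} => [|n] A; first by exists 1%:M; rewrite ?unitmx1 //; apply/is_trig_mxP => -[].
  have [P /unitarymx_unit P_unit] := Schur A (ltn0Sn n).
  by rewrite /similar_to conjumx // => ?; exists P.
rewrite -(char_poly_conj P_unit); set T := P *m A *m invmx P in T_trig *.
apply: (coef_in_subfield_of_power_sums HK (z := fun i => T i i)
  (q := fun i => \prod_(j | j != i) ('X - (T j j)%:P))).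
- exact: size_char_poly.
- by have /monicP := char_poly_monic T; rewrite lead_coefE size_char_poly.
- by move=> i; rewrite char_poly_trig // (bigD1 i).
- by rewrite char_poly_trig // deriv_prod; apply: eq_bigr => i _; rewrite derivXsubC mul1r.
- by move=> j; rewrite -mxtrace_trig_exp // conj_expmx // mxtrace_mulC mulmxA mulVmx ?mul1mx.
Qed.

Lemma rep_exp_in_span r (lam : 'I_r.+1 -> 'I_r.+1 -> 'I_r.+1 -> C) d
    (X : 'I_r.+1 -> 'M[C]_d) :
  is_rep lam X -> (forall i j k, lam i j k \in K) ->
  forall b j, exists2 c : 'I_r.+1 -> C,
    (forall k, c k \in K) & X b ^+ j = \sum_k c k *: X k.
Proof.
move=> [X0 XM] lamK b; elim=> [|j [c cK powE]].
  exists (fun k => (k == ord0)%:R) => [k|]; first exact: rpred_nat.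
  rewrite (bigD1 ord0) //= big1 ?addr0 => [|k /negbTE->]; last by rewrite scale0r.
  by rewrite scale1r X0 expr0.
exists (fun l => \sum_k c k * lam k b l) => [l|].
  by apply: rpred_sum => k _; rewrite rpredM.
rewrite exprSr powE -mulmxE mulmx_suml.
under eq_bigr do rewrite -scalemxAl XM scaler_sumr.
rewrite exchange_big /=; apply: eq_bigr => l _.
by rewrite scaler_suml; apply: eq_bigr => k _; rewrite scalerA.
Qed.

Lemma char_poly_rep_in_subfield r (lam : 'I_r.+1 -> 'I_r.+1 -> 'I_r.+1 -> C) d
    (X : 'I_r.+1 -> 'M[C]_d) :
  is_rep lam X -> (forall i j k, lam i j k \in K) -> (forall i, \tr (X i) \in K) ->
  forall b k, (char_poly (X b))`_k \in K.
Proof.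
move=> X_rep lamK trK b; apply: char_poly_coef_in_subfield => j.
have [c cK ->] := rep_exp_in_span X_rep lamK b j.
by rewrite raddf_sum rpred_sum // => i _ /=; rewrite mxtraceZ rpredM.
Qed.

Lemma multiplicity_in_subfield r (lam : 'I_r.+1 -> 'I_r.+1 -> 'I_r.+1 -> C)
    (star : 'I_r.+1 -> 'I_r.+1) (delta : 'I_r.+1 -> C) N
    (psi : 'I_N -> 'I_r.+1 -> C) (m : 'I_N -> C) a :
  is_RBA lam star -> is_pos_degree_map lam star delta -> is_standard lam star delta ->
  (forall a, is_irr_char lam (psi a)) ->
  (forall a b, (forall i, psi a i = psi b i) -> a = b) ->
  (forall i, tau delta i = \sum_a m a * psi a i) ->
  (forall i j k, lam i j k \in K) -> (forall i, psi a i \in K) -> m a \in K.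
Proof.
move=> HRBA Hdeg Hstd psi_irr psi_inj tau_dec lamK psiK.
have deltaK i : delta i \in K by rewrite -Hstd lamK.
rewrite (multiplicity_formula HRBA Hdeg Hstd psi_irr psi_inj tau_dec).
by rewrite rpred_div ?rpredM ?rpred_sum // => i _; rewrite ?rpredM ?rpredV.
Qed.

End ClosedFieldSubfield.

Theorem lemma2 (C : numClosedFieldType) (r : nat)
    (lam : 'I_r.+1 -> 'I_r.+1 -> 'I_r.+1 -> C) (star : 'I_r.+1 -> 'I_r.+1)
    (delta : 'I_r.+1 -> C)
    (HRBA : is_RBA lam star)
    (Hdeg : is_pos_degree_map lam star delta)
    (Hstd : is_standard lam star delta)
    (* Irr(A) = {psi a | a < N}, listed without repetition *)
    (N : nat) (psi : 'I_N -> 'I_r.+1 -> C)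
    (Hpsi_irr : forall a, is_irr_char lam (psi a))
    (Hpsi_inj : forall a b, (forall i, psi a i = psi b i) -> a = b)
    (Hpsi_all : forall chi, is_irr_char lam chi ->
                  exists a, forall i, chi i = psi a i)
    (* multiplicities: tau = \sum_psi m_psi psi *)
    (m : 'I_N -> C)
    (Hm : forall i, tau delta i = \sum_a m a * psi a i)
    (a : 'I_N) :
  in_field_gen (Fchi_gens lam (psi a)) (m a) /\
  (forall (d : nat) (X : 'I_r.+1 -> 'M[C]_d),
     is_rep lam X -> (forall i, \tr (X i) = psi a i) ->
     forall (b : 'I_r.+1) (k : nat),
       in_field_gen (Fchi_gens lam (psi a)) ((char_poly (X b))`_k)).
Proof.
have gens_lam (K : {pred C}) : (forall y, Fchi_gens lam (psi a) y -> y \in K) ->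
    forall i j k, lam i j k \in K.
  by move=> gensK i j k; apply: gensK; left; exists i, j, k.
have gens_psi (K : {pred C}) : (forall y, Fchi_gens lam (psi a) y -> y \in K) ->
    forall i, psi a i \in K.
  by move=> gensK i; apply: gensK; right; exists i.
split => [K HK gensK | d X X_rep X_tr b k K HK gensK].
- by apply: (multiplicity_in_subfield HK HRBA Hdeg Hstd Hpsi_irr Hpsi_inj Hm);
    [apply: gens_lam | apply: gens_psi].
- apply: (char_poly_rep_in_subfield HK X_rep (gens_lam K gensK)) => i.
  by rewrite X_tr gens_psi.
Qed.
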